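(* Let $\tau$ be a substitution satisfying the standing assumptions below such that $(X_\tau,\sigma)$ is quasi-invertible, and let $U\subset X_\tau$ be a clopen set containing the branch point. Let $h:U\to\{1,\ldots,H\}$ be the height function, $h(x)=\min\{k\ge1:\sigma^k(x)\in U\}$, and for $1\le k\le H$ and $0\le j\le k-1$ let $U_k^j=\sigma^j(h^{-1}(\{k\}))$. Then the sets $\{U_k^j:1\le k\le H,\ 0\le j\le k-1\}$ form a partition of $X_\tau$ into clopen sets.
   Context: Substitutions are extended to words and sequences by concatenation; $u$ is a fixed point of $\tau$, $\sigma$ the left shift, $X_\tau$ the closure of $\{\sigma^n(u):n\ge0\}$ in $\mathcal A^{\mathbb N}$. A branch point is a point of $X_\tau$ with more than one $\sigma$-preimage in $X_\tau$; quasi-invertible means $X_\tau$ has exactly one branch point. Standing assumptions: $\tau$ primitive (so $(X_\tau,\sigma)$ is minimal and $h$ is finite-valued and bounded), $X_\tau$ infinite, $\tau$ unilaterally recognizable, all powers of $\tau$ injective on letters. *)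

From mathcomp Require Import all_boot.
Set Implicit Arguments. Unset Strict Implicit. Unset Printing Implicit Defensive.

Definition word_sub (A : Type) (tau : A -> seq A) (w : seq A) : seq A :=
  flatten (map tau w).

Definition sub_pow (A : Type) (tau : A -> seq A) (n : nat) (w : seq A) : seq A :=
  iter n (word_sub tau) w.

Definition prefix (A : Type) (x : nat -> A) (n : nat) : seq A := mkseq x n.

(* Extension of tau to infinite words by concatenation: the i-th letter of
   tau(y) is the i-th letter of tau(y_0 ... y_i) (correct for non-erasing tau,
   which is implied by primitivity). *)
Definition sub_inf (A : Type) (tau : A -> seq A) (y : nat -> A) : nat -> A :=
  fun i => nth (y 0) (word_sub tau (prefix y i.+1)) i.

Definition shift (A : Type) (x : nat -> A) : nat -> A := fun i => x i.+1.
Definition shiftn (A : Type) (j : nat) (x : nat -> A) : nat -> A :=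
  fun i => x (i + j).

Definition agree (A : Type) (n : nat) (x y : nat -> A) : Prop :=
  forall i, i < n -> x i = y i.

Definition primitive (A : finType) (tau : A -> seq A) : Prop :=
  exists n, 0 < n /\ forall a b : A, b \in sub_pow tau n [:: a].

Definition fixed_point (A : Type) (tau : A -> seq A) (u : nat -> A) : Prop :=
  u = sub_inf tau u.

(* X_tau = closure of the sigma-orbit of u in A^N (product topology,
   A discrete): x in X_tau iff every prefix of x is a prefix of some sigma^m u *)
Definition Xtau (A : Type) (u : nat -> A) (x : nat -> A) : Prop :=
  forall n, exists m, agree n x (shiftn m u).

Definition finite_words (A : Type) (S : (nat -> A) -> Prop) : Prop :=
  exists l : seq (nat -> A),
    forall x, S x -> exists i, i < size l /\ x = nth x l i.

Definition powers_injective_on_letters (A : Type) (tau : A -> seq A) : Prop :=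
  forall n (a b : A), sub_pow tau n [:: a] = sub_pow tau n [:: b] -> a = b.

Definition recog_rep (A : Type) (tau : A -> seq A) (u : nat -> A)
  (x : nat -> A) (k : nat) (y : nat -> A) : Prop :=
  Xtau u y /\ k < size (tau (y 0)) /\ x = shiftn k (sub_inf tau y).

Definition unilaterally_recognizable (A : Type) (tau : A -> seq A)
  (u : nat -> A) : Prop :=
  forall x, Xtau u x ->
    exists k y, recog_rep tau u x k y /\
      forall k' y', recog_rep tau u x k' y' -> k' = k /\ y' = y.

Definition branch_point (A : Type) (u : nat -> A) (x : nat -> A) : Prop :=
  Xtau u x /\ exists y1 y2, Xtau u y1 /\ Xtau u y2 /\ y1 <> y2 /\
    shift y1 = x /\ shift y2 = x.

Definition quasi_invertible (A : Type) (u : nat -> A) : Prop :=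
  exists b, branch_point u b /\ forall x, branch_point u x -> x = b.

Definition rel_open (A : Type) (X U : (nat -> A) -> Prop) : Prop :=
  forall x, U x -> exists n, forall y, X y -> agree n x y -> U y.

Definition rel_clopen (A : Type) (X U : (nat -> A) -> Prop) : Prop :=
  (forall x, U x -> X x) /\ rel_open X U /\ rel_open X (fun y => X y /\ ~ U y).

Definition height_is (A : Type) (U : (nat -> A) -> Prop) (x : nat -> A)
  (k : nat) : Prop :=
  1 <= k /\ U (shiftn k x) /\ forall i, 1 <= i -> i < k -> ~ U (shiftn i x).

Definition tower_level (A : Type) (U : (nat -> A) -> Prop) (k j : nat)
  (x : nat -> A) : Prop :=
  exists y, U y /\ height_is U y k /\ x = shiftn j y.

(* The levels are closed: h^-1(k) is cut out by shifted copies of the clopen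
   set U, and its image under sigma^j is closed since X_tau is compact.  They are
   disjoint: if sigma^j y = sigma^j' y' with j < j', then y and sigma^(j'-j) y'
   (which is not in U) are distinct points whose orbits merge before time j, so
   one of them passes through a branch point, which lies in U; this contradicts
   the height of y.  They cover X_tau: the primitive fixed point u is
   recurrent, so every point of X_tau is a limit of points sigma^m u with m past
   a visit of u to U, each of which lies in some level, and a finite union of
   closed sets is closed.  Finally a partition of X_tau into finitely many
   closed sets consists of clopen sets. *)

From mathcomp Require Import all_boot zify.
From Stdlib Require Import Classical FunctionalExtensionality PropExtensionality.

Set Implicit Arguments. Unset Strict Implicit. Unset Printing Implicit Defensive.

Section Cylinders.
Variable A : Type.
Implicit Types (u x y z : nat -> A) (X S U : (nat -> A) -> Prop).

Lemma shiftn0 x : shiftn 0 x = x.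
Proof. by apply: functional_extensionality => i; rewrite /shiftn addn0. Qed.

Lemma shiftnD a b x : shiftn a (shiftn b x) = shiftn (a + b) x.
Proof. by apply: functional_extensionality => i; rewrite /shiftn addnA. Qed.

Lemma shift_shiftn i x : shift (shiftn i x) = shiftn i.+1 x.
Proof. by apply: functional_extensionality => n; rewrite /shift /shiftn addSnnS. Qed.

Lemma shiftn_eq_ge i j x y : j <= i -> shiftn j x = shiftn j y -> shiftn i x = shiftn i y.
Proof. by move=> ji E; rewrite -(subnK ji) -!shiftnD E. Qed.

Lemma agree_le m n x y : agree n x y -> m <= n -> agree m x y.
Proof. by move=> H mn i im; apply: H; apply: leq_trans mn. Qed.

Lemma agree_trans n x y z : agree n x y -> agree n y z -> agree n x z.
Proof. by move=> Hxy Hyz i ni; rewrite Hxy // Hyz. Qed.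

Lemma agree_shiftn n i x y : agree (n + i) x y -> agree n (shiftn i x) (shiftn i y).
Proof. by move=> H l ln; apply: H; rewrite ltn_add2r. Qed.

Lemma Xtau_shiftn u x j : Xtau u x -> Xtau u (shiftn j x).
Proof.
move=> Hx n; have [m Hm] := Hx (n + j); exists (j + m) => i ni.
by rewrite /shiftn Hm ?ltn_add2r // /shiftn addnA.
Qed.

Lemma Xtau_orbit u m : Xtau u (shiftn m u).
Proof. by move=> n; exists m. Qed.

Lemma Xtau_closed u x : (forall n, exists2 z, Xtau u z & agree n x z) -> Xtau u x.
Proof.
move=> Hx n; have [z Xz Az] := Hx n; have [m Hm] := Xz n.
by exists m; apply: agree_trans Hm.
Qed.

Definition rel_closed X S : Prop :=
  forall x, X x -> (forall n, exists2 z, S z & agree n x z) -> S x.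

Lemma rel_open_compl X S : rel_closed X S -> rel_open X (fun y => X y /\ ~ S y).
Proof.
move=> HS x [Xx nSx]; apply: NNPP => Hno; apply: nSx; apply: HS => // n.
apply: NNPP => Hn; apply: Hno; exists n => y Xy Axy; split => // Sy.
by apply: Hn; exists y.
Qed.

Lemma rel_closed_compl X U : rel_open X U -> rel_closed X (fun y => X y /\ ~ U y).
Proof.
move=> HU x Xx Hx; split => // Ux; have [n Hn] := HU x Ux.
by have [z [Xz nUz] Axz] := Hx n; apply: nUz; apply: Hn.
Qed.

Lemma rel_clopen_closed X U : rel_clopen X U -> rel_closed X U.
Proof.
move=> [UX [_ HC]] x Xx Hx; apply: NNPP => nUx.
have [n Hn] := HC x (conj Xx nUx); have [z Uz Axz] := Hx n.
by have [_ ] := Hn z (UX z Uz) Axz.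
Qed.

Lemma rel_closed_guard (P : Prop) X S :
  (P -> rel_closed X S) -> rel_closed X (fun x => P /\ S x).
Proof.
move=> HS x Xx Hx; have [_ [p _] _] := Hx 0.
split => //; apply: HS => // n; have [z [_ Sz] Az] := Hx n; by exists z.
Qed.

Lemma rel_closed_preim_shiftn u S i :
  rel_closed (Xtau u) S -> rel_closed (Xtau u) (fun y => S (shiftn i y)).
Proof.
move=> HS x Xx Hx; apply: HS; first exact: Xtau_shiftn.
move=> n; have [z Sz Az] := Hx (n + i); exists (shiftn i z) => //.
exact: agree_shiftn.
Qed.

End Cylinders.

Lemma finite_uniform_bound (T : finType) (Q : T -> nat -> Prop) :
  (forall t n m, n <= m -> Q t n -> Q t m) ->
  (forall t, exists n, Q t n) -> exists n, forall t, Q t n.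
Proof.
move=> Qmono Qall.
suff [n Hn] : exists n, forall t, t \in enum T -> Q t n.
  by exists n => t; apply: Hn; rewrite mem_enum.
elim: (enum T) => [|t0 s [n IH]]; first by exists 0.
have [n0 H0] := Qall t0; exists (maxn n n0) => t; rewrite in_cons => /orP [/eqP->|st].
  exact: Qmono (leq_maxr _ _) H0.
exact: Qmono (leq_maxl _ _) (IH t st).
Qed.

Lemma finite_pigeonhole (T : finType) (P : T -> nat -> Prop) :
  (forall t n m, m <= n -> P t n -> P t m) ->
  (forall n, exists t, P t n) -> exists t, forall n, P t n.
Proof.
move=> Pmono Pall; apply: NNPP => Hno.
have [n Hn] : exists n, forall t, ~ P t n.
  apply: finite_uniform_bound => [t n m nm nP Pm|t]; first exact/nP/(Pmono _ _ _ nm).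
  by apply: NNPP => Hc; apply: Hno; exists t => n; apply: NNPP => nP; apply: Hc; exists n.
by have [t] := Pall n; apply: Hn.
Qed.

Lemma rel_closed_bigcup (A : Type) (T : finType) X (S : T -> (nat -> A) -> Prop) :
  (forall t, rel_closed X (S t)) -> rel_closed X (fun x => exists t, S t x).
Proof.
move=> S_closed x Xx Hx.
have [t Ht] : exists t, forall n, exists2 z, S t z & agree n x z.
  apply: finite_pigeonhole => [t n m mn [z Sz Az]|n].
    by exists z; last exact: agree_le Az mn.
  by have [z [t Sz] Az] := Hx n; exists t, z.
by exists t; apply: S_closed.
Qed.

Section FinitePartition.
Variables (A : Type) (T : finType) (X : (nat -> A) -> Prop) (S : T -> (nat -> A) -> Prop).
Hypotheses (S_closed : forall t, rel_closed X (S t)) (S_sub : forall t x, S t x -> X x)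
  (S_cover : forall x, X x -> exists t, S t x)
  (S_disjoint : forall t t' x, S t x -> S t' x -> t = t').

Lemma rel_clopen_partition t : rel_clopen X (S t).
Proof.
split; first exact: S_sub.
split; last exact: rel_open_compl.
have others_closed : rel_closed X (fun x => exists t', t' != t /\ S t' x).
  by apply: rel_closed_bigcup => t'; apply: rel_closed_guard.
move=> x Stx; have [|n Hn] := rel_open_compl others_closed (x := x).
  split; first exact: S_sub Stx.
  by move=> [t' [/eqP t't St'x]]; apply/t't/(S_disjoint St'x Stx).
exists n => y Xy Axy; have [Xy' nOy] := Hn y Xy Axy.
have [t' St'y] := S_cover Xy; case: (eqVneq t' t) => [<- //|t't].
by case: nOy; exists t'.
Qed.

End FinitePartition.

(* Compactness: a pigeonhole choice among the finitely many length-[j] prefixes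
   of the approximating points yields the preimage of the limit. *)
Lemma rel_closed_shiftn_image (A : finType) (u : nat -> A) S j :
  (forall y, S y -> Xtau u y) -> rel_closed (Xtau u) S ->
  rel_closed (Xtau u) (fun x => exists2 y, S y & x = shiftn j y).
Proof.
move=> SX HS x Xx Hx.
pose P (t : j.-tuple A) n :=
  exists y, [/\ S y, agree n x (shiftn j y) & forall i, i < j -> y i = nth (x 0) t i].
have [t Ht] : exists t, forall n, P t n.
  apply: finite_pigeonhole => [t n m mn [y [Sy Ay Ey]]|n].
    by exists y; split; [|exact: agree_le Ay mn|].
  have [_ [y Sy ->] Ay] := Hx n; have sz : size (mkseq y j) == j by rewrite size_mkseq.
  by exists (Tuple sz), y; split => // i ij /=; rewrite nth_mkseq.
pose y i := if i < j then nth (x 0) t i else x (i - j).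
have Ay n : exists2 yn, S yn & agree (j + n) y yn.
  have [yn [Syn Ayn Eyn]] := Ht n; exists yn => // i ijn.
  rewrite /y; case: ifP => ij; first by rewrite Eyn.
  have ji : j <= i by rewrite leqNgt ij.
  by rewrite Ayn /shiftn ?subnK //; lia.
exists y; last first.
  by apply: functional_extensionality => i; rewrite /shiftn /y ifN ?addnK //; lia.
apply: HS => [|n].
  apply: Xtau_closed => n; have [yn Syn Ayn] := Ay n; exists yn; first exact: SX.
  by apply: (agree_le Ayn); lia.
by have [yn Syn Ayn] := Ay n; exists yn => //; apply: (agree_le Ayn); lia.
Qed.

Lemma height_set_closed (A : Type) (u : nat -> A) U k :
  rel_clopen (Xtau u) U -> rel_closed (Xtau u) (fun y => U y /\ height_is U y k).
Proof.
move=> HU; have [UX _] := HU; have U_closed := rel_clopen_closed HU.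
have nU_closed := rel_closed_compl HU.2.1.
move=> x Xx Hx; have [_ [_ [k1 _]] _] := Hx 0.
have approx (P : (nat -> A) -> Prop) :
    (forall y, U y /\ height_is U y k -> P y) -> forall n, exists2 z, P z & agree n x z.
  by move=> HP n; have [z Hz Az] := Hx n; exists z => //; apply: HP.
split; first by apply: U_closed => //; apply: approx => y [].
split=> //; split.
  by apply: (rel_closed_preim_shiftn (i := k) U_closed) => //; apply: approx => y [_ [_ []]].
move=> i i1 ik; apply: (proj2 (rel_closed_preim_shiftn (i := i) nU_closed Xx _)).
apply: approx => y [Uy [_ [_ Hy]]].
by split; [apply: Xtau_shiftn; apply: UX | apply: Hy].
Qed.

Lemma tower_level_Xtau (A : Type) (u : nat -> A) U k j x :
  (forall y, U y -> Xtau u y) -> tower_level U k j x -> Xtau u x.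
Proof. by move=> UX [y [Uy [_ ->]]]; apply: Xtau_shiftn; apply: UX. Qed.

Lemma tower_level_closed (A : finType) (u : nat -> A) U k j :
  rel_clopen (Xtau u) U -> rel_closed (Xtau u) (tower_level U k j).
Proof.
move=> HU x Xx Hx; have [UX _] := HU.
have [|n|y [Uy Hy] ->] := rel_closed_shiftn_image (j := j) _ (height_set_closed (k := k) HU) Xx.
- by move=> y [Uy _]; apply: UX.
- by have [z [y [Uy [Hy ->]]] Az] := Hx n; exists (shiftn j y) => //; exists y.
- by exists y.
Qed.

Lemma branch_point_of_merge (A : Type) (u y w : nat -> A) j :
  Xtau u y -> Xtau u w -> y <> w -> shiftn j y = shiftn j w ->
  exists2 i, i < j & branch_point u (shiftn i.+1 y).
Proof.
move=> Xy Xw yw; elim: j => [|j IH] Ej; first by case: yw; rewrite -(shiftn0 y) Ej shiftn0.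
case: (classic (shiftn j y = shiftn j w)) => [/IH [i ij Hi]|nEj]; first by exists i => //; lia.
exists j => //; split; first exact: Xtau_shiftn.
exists (shiftn j y), (shiftn j w); split; first exact: Xtau_shiftn.
by split; [apply: Xtau_shiftn | rewrite !shift_shiftn Ej].
Qed.

Section TowerLevels.
Variables (A : Type) (u : nat -> A) (U : (nat -> A) -> Prop).
Hypotheses (UX : forall y, U y -> Xtau u y) (U_branch : forall b, branch_point u b -> U b).

Lemma height_merge y1 y2 k1 k2 j :
  height_is U y1 k1 -> height_is U y2 k2 -> j < k1 -> j < k2 ->
  shiftn j y1 = shiftn j y2 -> k1 = k2.
Proof.
wlog k12 : y1 y2 k1 k2 / k1 <= k2 => [Hwlog|].
  move=> H1 H2 j1 j2 E; case: (leqP k1 k2) => [k12|/ltnW k21]; first exact: Hwlog E.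
  by symmetry; apply: Hwlog (esym E).
move=> [k1_pos [Uk1 _]] [_ [_ nU2]] j1 j2 E; apply/eqP; rewrite eqn_leq k12 leqNgt.
by apply/negP => k21; apply: (nU2 k1) => //; rewrite -(shiftn_eq_ge (ltnW j1) E).
Qed.

Lemma tower_level_floor_lt k j k' j' x : j < k -> j < j' -> j' < k' ->
  tower_level U k j x -> tower_level U k' j' x -> False.
Proof.
move=> jk jj' j'k' [y [Uy [[_ [_ nUy]] Ex]]] [y' [Uy' [[_ [_ nUy']] Ex']]].
set w := shiftn (j' - j) y'.
have nUw : ~ U w by apply: nUy'; lia.
have Ew : shiftn j y = shiftn j w by rewrite /w shiftnD -Ex Ex' subnKC // ltnW.
have [|i ij Hi] := branch_point_of_merge (UX Uy) (Xtau_shiftn _ (UX Uy')) _ Ew.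
  by move=> yw; apply: nUw; rewrite /w -yw.
by apply: (nUy i.+1) => //; [lia | apply: U_branch].
Qed.

Lemma tower_level_disjoint k j k' j' x : j < k -> j' < k' ->
  tower_level U k j x -> tower_level U k' j' x -> k = k' /\ j = j'.
Proof.
move=> jk j'k' L L'; case: (ltngtP j j') => [jj'|j'j|jj'].
- by case: (tower_level_floor_lt jk jj' j'k' L L').
- by case: (tower_level_floor_lt j'k' j'j jk L' L).
move: L L'; rewrite -jj' => [[y [_ [Hy ->]]] [y' [_ [Hy' Ey]]]].
by split => //; apply: (height_merge Hy Hy' jk _ Ey); rewrite jj'.
Qed.

End TowerLevels.

Section Substitution.
Variables (A : Type) (tau : A -> seq A).

Lemma word_sub_cat s1 s2 : word_sub tau (s1 ++ s2) = word_sub tau s1 ++ word_sub tau s2.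
Proof. by rewrite /word_sub map_cat flatten_cat. Qed.

Lemma word_sub1 c : word_sub tau [:: c] = tau c.
Proof. by rewrite /word_sub /= cats0. Qed.

Lemma sub_powS n w : sub_pow tau n.+1 w = word_sub tau (sub_pow tau n w).
Proof. by []. Qed.

Lemma sub_powSr n w : sub_pow tau n.+1 w = sub_pow tau n (word_sub tau w).
Proof. by rewrite /sub_pow iterSr. Qed.

Lemma sub_powD m n w : sub_pow tau (m + n) w = sub_pow tau m (sub_pow tau n w).
Proof. by rewrite /sub_pow iterD. Qed.

Lemma sub_pow_cat n s1 s2 : sub_pow tau n (s1 ++ s2) = sub_pow tau n s1 ++ sub_pow tau n s2.
Proof. by elim: n => [//|n IH]; rewrite !sub_powS IH word_sub_cat. Qed.

Lemma sub_pow_nil n : sub_pow tau n [::] = [::].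
Proof. by elim: n => [//|n IH]; rewrite sub_powS IH. Qed.

Lemma prefix_nth (x : nat -> A) (w : seq A) (x0 : A) i :
  prefix x (size w) = w -> i < size w -> x i = nth x0 w i.
Proof. by move=> Hw iw; rewrite -Hw nth_mkseq. Qed.

Lemma prefix_split (y : nat -> A) m n :
  m <= n -> prefix y n = prefix y m ++ drop m (prefix y n).
Proof.
move=> mn; rewrite -{1}(cat_take_drop m (prefix y n)) /prefix /mkseq -map_take take_iota.
by rewrite (minn_idPl mn).
Qed.

Hypothesis tau_nonerasing : forall c, 0 < size (tau c).

Lemma size_word_sub s : size s <= size (word_sub tau s).
Proof.
elim: s => [//|c s IH]; rewrite -cat1s word_sub_cat word_sub1 !size_cat.
by have := tau_nonerasing c; rewrite /=; lia.
Qed.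

Lemma size_sub_pow n s : size s <= size (sub_pow tau n s).
Proof.
by elim: n => [//|n IH]; rewrite sub_powS; apply: leq_trans IH (size_word_sub _).
Qed.

Lemma sub_inf_prefix (y : nat -> A) L i :
  i < size (word_sub tau (prefix y L)) ->
  sub_inf tau y i = nth (y 0) (word_sub tau (prefix y L)) i.
Proof.
move=> iL; rewrite /sub_inf; case: (leqP L i.+1) => Li.
  by rewrite (prefix_split y Li) word_sub_cat nth_cat iL.
rewrite (prefix_split y (ltnW Li)) word_sub_cat nth_cat.
by have := size_word_sub (prefix y i.+1); rewrite size_mkseq => ->.
Qed.

Lemma fixed_point_prefix (u : nat -> A) (w : seq A) :
  fixed_point tau u -> prefix u (size w) = w ->
  prefix u (size (word_sub tau w)) = word_sub tau w.
Proof.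
move=> Hfix Hw; rewrite -Hw.
apply: (@eq_from_nth _ (u 0)); first by rewrite size_mkseq.
move=> i; rewrite size_mkseq => iW.
by rewrite nth_mkseq // {1}Hfix (sub_inf_prefix (L := size w)).
Qed.

Lemma sub_pow_growth a b s : tau a = a :: b :: s -> forall n, n < size (sub_pow tau n [:: a]).
Proof.
move=> Ea; elim=> [//|n IH].
rewrite sub_powSr word_sub1 Ea -cat1s sub_pow_cat size_cat.
by have := size_sub_pow n (b :: s); rewrite /=; lia.
Qed.

(* [tau^(n+N+1)(a) = tau^(n+N)(a) tau^n(c1) tau^n(a) tau^n(c2) tau^(n+N)(s)] *)
Lemma sub_pow_late_infix a b s N c1 c2 :
  tau a = a :: b :: s -> sub_pow tau N [:: b] = c1 ++ a :: c2 -> forall n,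
  exists X Y, sub_pow tau (n + N).+1 [:: a] = X ++ sub_pow tau n [:: a] ++ Y
              /\ size (sub_pow tau (n + N) [:: a]) <= size X.
Proof.
move=> Ea Eb n; set m := n + N.
exists (sub_pow tau m [:: a] ++ sub_pow tau n c1), (sub_pow tau n c2 ++ sub_pow tau m s).
split; last by rewrite size_cat leq_addr.
rewrite sub_powSr word_sub1 Ea (sub_pow_cat m [:: a] (b :: s)) (sub_pow_cat m [:: b] s).
rewrite (sub_powD n N [:: b]) Eb (sub_pow_cat n c1 (a :: c2)) (sub_pow_cat n [:: a] c2).
by rewrite -!catA.
Qed.

End Substitution.

Definition recurrent (A : Type) (u : nat -> A) : Prop :=
  forall L M, exists2 q, M <= q & agree L u (shiftn q u).

Section PrimitiveSubstitution.
Variables (A : finType) (tau : A -> seq A).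
Hypothesis tau_primitive : primitive tau.

Lemma primitive_nonerasing c : 0 < size (tau c).
Proof.
have [[|N] [// _ Hall]] := tau_primitive.
have := Hall c c; rewrite sub_powSr word_sub1; case: (tau c) => [|//].
by rewrite sub_pow_nil.
Qed.

Lemma primitive_fixed_letter a : tau a = [:: a] -> forall c, c = a.
Proof.
have [N [_ Hall]] := tau_primitive; move=> Ea c.
have Wa n : sub_pow tau n [:: a] = [:: a].
  by elim: n => [//|n IH]; rewrite sub_powSr word_sub1 Ea.
by have := Hall a c; rewrite Wa inE => /eqP.
Qed.

(* [u] begins with every [tau^n(u_0)], which reoccurs in [tau^(n+N+1)(u_0)]
   after position [|tau^(n+N)(u_0)| > n + N]. *)
Lemma primitive_fixed_point_recurrent u : fixed_point tau u -> recurrent u.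
Proof.
move=> Hfix L M; have ne := primitive_nonerasing; set a := u 0.
have pre n : prefix u (size (sub_pow tau n [:: a])) = sub_pow tau n [:: a].
  by elim: n => [//|n IH]; rewrite sub_powS; apply: fixed_point_prefix.
have [r Ea] : exists r, tau a = a :: r.
  have := pre 1; rewrite /sub_pow /= word_sub1.
  case: (tau a) (ne a) => [//|c r] _ Hp; exists r.
  by have /= <- := prefix_nth a Hp (ltn0Sn _).
case: r Ea => [|b s] Ea.
  have alla := primitive_fixed_letter Ea.
  by exists M => // i _; rewrite /shiftn (alla (u i)) (alla (u (i + M))).
have [N [_ Hall]] := tau_primitive.
have [c1 [c2 Eb]] : exists c1 c2, sub_pow tau N [:: b] = c1 ++ a :: c2.
  by case/splitPr: (Hall b a) => c1 c2; exists c1, c2.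
have [X [Y [EX sX]]] := sub_pow_late_infix Ea Eb (L + M).
exists (size X); first by have := sub_pow_growth ne Ea (L + M + N); lia.
move=> i iL; have iW : i < size (sub_pow tau (L + M) [:: a]).
  by have := sub_pow_growth ne Ea (L + M); lia.
have iX : i + size X < size (sub_pow tau (L + M + N).+1 [:: a]).
  by rewrite EX !size_cat; lia.
rewrite /shiftn (prefix_nth a (pre _) iW) (prefix_nth a (pre _) iX).
by rewrite EX nth_cat ltnNge leq_addl /= addnK nth_cat iW.
Qed.

End PrimitiveSubstitution.

Lemma last_visit (P : nat -> Prop) p m : P p -> p <= m ->
  exists p', [/\ p <= p' <= m, P p' & forall q, p' < q <= m -> ~ P q].
Proof.
move=> Pp; elim: m => [|m IH] pm; first by exists p; split => [|//|q qp _]; lia.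
case: (classic (P m.+1)) => [Pm|nPm]; first by exists m.+1; split => [|//|q qm _]; lia.
have [|p' [pp' Pp' Hp']] := IH.
  by move: pm; rewrite leq_eqVlt => /orP [/eqP pm|//]; case: nPm; rewrite -pm.
exists p'; split => //; first lia.
move=> q /andP [p'q]; rewrite leq_eqVlt => /orP [/eqP -> //|qm].
by apply: Hp'; rewrite p'q -ltnS.
Qed.

Lemma shiftn_in_tower (A : Type) (U : (nat -> A) -> Prop) H x p m :
  (forall y, U y -> exists k, 1 <= k <= H /\ height_is U y k) ->
  U (shiftn p x) -> p <= m ->
  exists k j, [/\ 1 <= k <= H, j < k & tower_level U k j (shiftn m x)].
Proof.
move=> Hh Up pm.
have [p' [/andP [_ p'm] Up' no_visit]] := last_visit (P := fun q => U (shiftn q x)) Up pm.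
have [k [Hk Hy]] := Hh _ Up'; exists k, (m - p'); split => //.
  rewrite ltnNge; apply/negP => km; apply: (no_visit (k + p')).
    by have := Hy.1; lia.
  by rewrite -shiftnD; apply: Hy.2.1.
by exists (shiftn p' x); split => //; split => //; rewrite shiftnD subnK.
Qed.

Lemma recurrent_Xtau_approx (A : Type) (u x : nat -> A) : recurrent u -> Xtau u x ->
  forall n M, exists2 m, M <= m & agree n x (shiftn m u).
Proof.
move=> Hrec Xx n M; have [m0 Hm0] := Xx n; have [q Mq Aq] := Hrec (n + m0) M.
exists (m0 + q); first lia.
by move=> i ni; rewrite Hm0 // /shiftn addnA; apply: Aq; lia.
Qed.

Lemma rel_open_meets_orbit (A : Type) (u x : nat -> A) U :
  rel_open (Xtau u) U -> U x -> Xtau u x -> exists m, U (shiftn m u).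
Proof.
move=> HU Ux Xx; have [n Hn] := HU x Ux; have [m Hm] := Xx n.
by exists m; apply: Hn => //; apply: Xtau_orbit.
Qed.

Theorem lemma14 (A : finType) (tau : A -> seq A) (u : nat -> A)
  (Hprim : primitive tau)
  (Hfix : fixed_point tau u)
  (Hinf : ~ finite_words (Xtau u))
  (Hrec : unilaterally_recognizable tau u)
  (Hinj : powers_injective_on_letters tau)
  (Hqi : quasi_invertible u)
  (U : (nat -> A) -> Prop)
  (HU : rel_clopen (Xtau u) U)
  (HUb : forall b, branch_point u b -> U b)
  (H : nat)
  (Hh : forall x, U x -> exists k, 1 <= k <= H /\ height_is U x k) :
  (forall k j, 1 <= k <= H -> j < k -> rel_clopen (Xtau u) (tower_level U k j))
  /\ (forall x, Xtau u x ->
        exists k j, [/\ 1 <= k <= H, j < k & tower_level U k j x])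
  /\ (forall k j k' j' x, 1 <= k <= H -> j < k -> 1 <= k' <= H -> j' < k' ->
        tower_level U k j x -> tower_level U k' j' x -> k = k' /\ j = j').
Proof.
have [UX [U_open _]] := HU; have [b [Bb _]] := Hqi.
have [p0 Up0] := rel_open_meets_orbit U_open (HUb b Bb) Bb.1.
pose S (t : 'I_H.+1 * 'I_H.+1) x := (1 <= t.1 <= H) && (t.2 < t.1) /\ tower_level U t.1 t.2 x.
have S_level k j (Hk : 1 <= k <= H) (jk : j < k) :
    exists t, tower_level U k j = S t.
  have [kH jH] : k < H.+1 /\ j < H.+1 by lia.
  exists (Ordinal kH, Ordinal jH); apply: functional_extensionality => x.
  by apply: propositional_extensionality; rewrite /S /= Hk jk; split => [|[]].
have S_closed t : rel_closed (Xtau u) (S t).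
  by apply: rel_closed_guard => _; apply: tower_level_closed.
have S_sub t x : S t x -> Xtau u x by move=> [_]; apply: tower_level_Xtau.
have S_disjoint t t' x : S t x -> S t' x -> t = t'.
  case: t t' => [[k ?] [j ?]] [[k' ?] [j' ?]] [/andP [_ jk] L] [/andP [_ j'k'] L'].
  have [/= Ek Ej] := tower_level_disjoint UX HUb jk j'k' L L'.
  by subst; congr pair; apply: val_inj.
have S_cover x : Xtau u x -> exists t, S t x.
  move=> Xx; apply: rel_closed_bigcup => // n.
  have [m p0m Am] := recurrent_Xtau_approx (primitive_fixed_point_recurrent Hprim Hfix) Xx n p0.
  have [k [j [Hk jk L]]] := shiftn_in_tower Hh Up0 p0m.
  have [t Et] := S_level k j Hk jk; rewrite Et in L.
  by exists (shiftn m u) => //; exists t.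
split; last split.
- move=> k j Hk jk; have [t ->] := S_level k j Hk jk.
  exact: rel_clopen_partition.
- by move=> x /S_cover [[k j] [/andP [Hk jk] L]]; exists k, j.
- by move=> k j k' j' x _ jk _ j'k'; exact: (tower_level_disjoint UX HUb jk j'k').
Qed.
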